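(* Let $p\in\mathcal P$ be such that $\mu(p^r)\le\mu(p)$. Then: (i) $D_{\mu(p)}(p)\cap D_{\mu(p^r)}(p^r)\subseteq\mathrm I(\Gamma_{\mu(p)}(p))$; in particular, if $\Gamma_{\mu(p)}(p)$ is connected, then $D_{\mu(p)}(p)\cap D_{\mu(p^r)}(p^r)=\varnothing$. (ii) If $|D_{\mu(p)}(p)|=1$ and $\Gamma_{\mu(p)}(p)$ is acyclic, then $D_{\mu(p)}(p)\cap D_{\mu(p^r)}(p^r)=\varnothing$.
   Context: Let $n,h\ge2$, $N=\{1,\dots,n\}$, $H=\{1,\dots,h\}$, $\mathcal P$ the set of $h$-tuples of linear orders on $N$, $p^r$ the profile obtained by reversing each order; $x>_{p_i}y$ means $x\neq y$ and $p_i$ ranks $x$ above $y$; for an integer $\mu\in(h/2,h]$, $x>^p_\mu y$ means $|\{i: x>_{p_i}y\}|\ge\mu$; $D_\mu(p)=\{x\in N: \forall y,\ |\{i: y>_{p_i}x\}|<\mu\}$; $\mu(p)=\min\{\mu\in\mathbb N\cap(h/2,h]: D_\mu(p)\ne\varnothing\}$. $\Gamma_\mu(p)$ is the directed graph $(N,\{(x,y): x>^p_\mu y\})$. For a directed graph, $\mathrm I$ is the set of isolated vertices (no arc in or out); connected means the underlying undirected graph is connected; acyclic means it contains no directed cycle (on $l\ge2$ distinct vertices) as a subgraph. *)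

From mathcomp Require Import all_boot.
Set Implicit Arguments. Unset Strict Implicit. Unset Printing Implicit Defensive.

(* Alternatives N = {1..n} are modelled by 'I_n, voters H = {1..h} by 'I_h. *)
Section Defs.
Variables (n h : nat).

(* A linear order, as a (weak, reflexive) relation: x is ranked at least as high as y. *)
Definition linear_order (T : finType) (r : rel T) : Prop :=
  [/\ reflexive r, antisymmetric r, transitive r & total r].

Definition profile := 'I_h -> rel 'I_n.

Definition is_profile (p : profile) : Prop := forall i, linear_order (p i).

Definition rev_profile (p : profile) : profile := fun i x y => p i y x.

Definition beats (p : profile) (i : 'I_h) (x y : 'I_n) : bool := (x != y) && p i x y.

Definition nbeats (p : profile) (x y : 'I_n) : nat := #|[set i | beats p i x y]|.

Definition maj (mu : nat) (p : profile) (x y : 'I_n) : bool := mu <= nbeats p x y.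

Definition Dset (mu : nat) (p : profile) : {set 'I_n} :=
  [set x | [forall y, nbeats p y x < mu]].

Definition quota (mu : nat) : bool := (h < mu.*2) && (mu <= h).

(* mu(p) = min {mu in N cap (h/2,h] : D_mu(p) <> emptyset}; the candidates are
   scanned in increasing order, default h (never used: D_h(p) is nonempty). *)
Definition mu_of (p : profile) : nat :=
  head h [seq m <- iota 0 h.+1 | quota m && (Dset m p != set0)].

Definition Gamma (mu : nat) (p : profile) : rel 'I_n := maj mu p.

Definition isolated (T : finType) (e : rel T) : {set T} :=
  [set x | [forall y, ~~ e x y && ~~ e y x]].

Definition graph_connected (T : finType) (e : rel T) : Prop :=
  forall x y, connect (fun a b => e a b || e b a) x y.

Definition graph_acyclic (T : finType) (e : rel T) : Prop :=
  forall s : seq T, uniq s -> 2 <= size s -> ~~ cycle e s.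

End Defs.

From mathcomp Require Import all_boot.

(* An alternative in both D_mu(p) and D_mu'(p^r) with mu' <= mu is beaten by
   fewer than mu voters and beats fewer than mu' <= mu voters, so it has no arc
   in Gamma_mu(p): it is isolated, which is impossible in a connected graph on
   at least two vertices.  If moreover D_mu(p) = {x}, every other alternative
   is beaten by some alternative at quota mu, necessarily different from x and
   from itself; following these predecessors inside N \ {x} must close a
   directed cycle, so Gamma_mu(p) is not acyclic.  Neither argument uses that
   the p_i are linear orders, nor the bound on h. *)

Section Digraph.
Context {T : finType}.

Lemma exists_neq (x : T) : 1 < #|T| -> exists y, y != x.
Proof.
move=> /card_gt1P [a [b [_ _ ab]]].
by case: (eqVneq x a) => [-> | xa]; [exists b; rewrite eq_sym | exists a; rewrite eq_sym].
Qed.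

Lemma exists_fcycle_orbit (f : T -> T) y : exists k, fcycle f (orbit f (iter k f y)).
Proof.
have /trajectP [k lt_k_order iter_order_eq] := looping_order f y.
exists k; set w := iter k f y; rewrite -fconnect_f.
have w_periodic : iter (order f y - k) f w = w by rewrite /w -iterD subnK 1?ltnW.
have := fconnect_iter f (order f y - k).-1 (f w).
by rewrite -iterSr prednK ?subn_gt0 // w_periodic.
Qed.

Context {e : rel T}.

(* Otherwise choosing a predecessor of each vertex of A eventually closes a cycle. *)
Lemma acyclic_source (A : {pred T}) y0 :
  graph_acyclic e -> y0 \in A -> exists2 y, y \in A & {in A, forall z, e z y -> z = y}.
Proof.
move=> acyclic_e Ay0.
pose is_source y := [forall z, (z \in A) && e z y ==> (z == y)].
have [y /andP [Ay /forallP source_y] | no_source] := pickP [pred y in A | is_source y].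
  by exists y => // z Az ezy; apply/eqP; rewrite (implyP (source_y z)) ?Az.
pose pred_of y := odflt y [pick z | [&& z \in A, z != y & e z y]].
have pred_ofP y : y \in A -> [&& pred_of y \in A, pred_of y != y & e (pred_of y) y].
  move=> Ay; rewrite /pred_of; case: pickP => [z -> // | none] /=.
  move: (no_source y); rewrite /= Ay /= => /negbT/forallPn [z].
  by rewrite negb_imply -andbA => /andP [Az /andP [ezy zy]]; move: (none z); rewrite Az zy ezy.
have pred_of_in : {homo pred_of : y / y \in A} by move=> y /pred_ofP /and3P [].
have [k cycle_w] := exists_fcycle_orbit pred_of y0.
set w := iter k pred_of y0 in cycle_w.
have Aw : w \in A by apply: iter_in.
have A_orbit : all [in A] (orbit pred_of w).
  by apply/allP => _ /trajectP [i _ ->]; apply: iter_in.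
have orbit_gt1 : 1 < size (orbit pred_of w).
  rewrite size_orbit; move: cycle_w; rewrite /orbit.
  case: (order pred_of w) (order_gt0 pred_of w) => [|[|o]] //= _.
  by rewrite andbT => /eqP fixed_w; have /and3P [_ /eqP []] := pred_ofP w Aw.
have cycle_rev : cycle e (rev (orbit pred_of w)).
  rewrite rev_cycle; apply: (sub_in_cycle (P := [in A])) A_orbit cycle_w => a b Aa _ /eqP <-.
  by have /and3P [] := pred_ofP a Aa.
have := acyclic_e (rev (orbit pred_of w)).
by rewrite rev_uniq orbit_uniq size_rev orbit_gt1 cycle_rev => /(_ isT isT).
Qed.

Lemma connected_isolated0 : 1 < #|T| -> graph_connected e -> isolated e = set0.
Proof.
move=> T_gt1 connected_e; apply/setP => x; rewrite !inE.
apply/negbTE/negP => /forallP isolated_x.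
have [y yx] := exists_neq x T_gt1.
have /connectP [[| z s] /=] := connected_e x y; first by move=> _ eq_y; rewrite eq_y eqxx in yx.
by case/andP => /orP [] arc; move: (isolated_x z); rewrite arc ?andbF.
Qed.

End Digraph.

Section Profiles.
Context {n h : nat}.
Implicit Types (p : profile n h) (mu : nat).

Lemma nbeats_rev p x y : nbeats (rev_profile p) y x = nbeats p x y.
Proof. by apply: eq_card => i; rewrite !inE /beats eq_sym. Qed.

Lemma nbeats_diag p x : nbeats p x x = 0.
Proof. by apply: eq_card0 => i; rewrite !inE /beats eqxx. Qed.

Lemma Dset_gt0 p mu x : x \in Dset mu p -> 0 < mu.
Proof. by rewrite inE => /forallP /(_ x); rewrite nbeats_diag. Qed.

Lemma Dset_rev_isolated p mu mu' :
  mu' <= mu -> Dset mu p :&: Dset mu' (rev_profile p) \subset isolated (Gamma mu p).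
Proof.
move=> le_mu'_mu; apply/subsetP => x; rewrite !inE => /andP [/forallP unbeaten /forallP weak].
apply/forallP => y; rewrite /Gamma /maj -!ltnNge unbeaten andbT.
by rewrite -nbeats_rev (leq_trans (weak y)).
Qed.

Lemma Dset1_isolated_not_acyclic p mu x :
  1 < n -> Dset mu p = [set x] -> x \in isolated (Gamma mu p) ->
  ~ graph_acyclic (Gamma mu p).
Proof.
move=> n_gt1 Dset_x isolated_x acyclic_G.
have mu_gt0 : 0 < mu by apply: (@Dset_gt0 p mu x); rewrite Dset_x set11.
have [y0 y0x] : exists y, y != x by apply: exists_neq; rewrite card_ord.
have [y yx source_y] := @acyclic_source _ _ (predC1 x) y0 acyclic_G y0x.
have : y \notin Dset mu p by rewrite Dset_x inE.
rewrite inE negb_forall => /existsP [z]; rewrite -leqNgt => Gzy.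
have zx : z != x.
  apply: contraTneq Gzy => ->; move: isolated_x; rewrite inE => /forallP /(_ y).
  by case/andP.
by move: (Gzy); rewrite (source_y z zx Gzy) nbeats_diag leqNgt mu_gt0.
Qed.

End Profiles.

Theorem lemma5 (n h : nat) (p : profile n h) :
  2 <= n -> 2 <= h -> is_profile p ->
  mu_of (rev_profile p) <= mu_of p ->
  let D := Dset (mu_of p) p :&: Dset (mu_of (rev_profile p)) (rev_profile p) in
  let G := Gamma (mu_of p) p in
  [/\ D \subset isolated G,
      (graph_connected G -> D = set0) &
      (#|Dset (mu_of p) p| = 1 -> graph_acyclic G -> D = set0)].
Proof.
move=> n_gt1 _ _ le_mu D G.
have D_isolated : D \subset isolated G by apply: Dset_rev_isolated.
split => // [connected_G | card_D1 acyclic_G].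
  by apply/eqP; rewrite -subset0 -(connected_isolated0 _ connected_G) ?card_ord.
have [// | [x Dx]] := set_0Vmem D; exfalso.
have /setIP [Dx1 _] := Dx.
have /cards1P [x' Dset_x'] := introT eqP card_D1.
move: (Dx1); rewrite Dset_x' inE => /eqP x_x'; subst x'.
exact: (Dset1_isolated_not_acyclic _ _ _ n_gt1 Dset_x' (subsetP D_isolated x Dx) acyclic_G).
Qed.
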